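(* Consider the following group-based qualification system (the 2018 FIFA World Cup qualification format, European zone). There are $k=9$ groups of $6$ teams each; within each group every pair of teams plays a home and an away match. A win gives $3$ points, a draw $1$, a loss $0$. In each group teams are ranked by: (1) points, (2) goal difference (goals scored minus goals conceded) over all group matches, (3) goals scored over all group matches, then by any further fixed tie-breaking rules producing a strict order. Group winners are directly qualified ($\mathcal{R}=2$); teams ranked third to sixth are eliminated ($\mathcal{R}=0$). The nine runners-up form the repechage group; each runner-up is evaluated only on its $8$ matches against the teams ranked first to fifth in its group (the two matches against the sixth-placed team are discarded), and the runners-up are ranked by (1) points, (2) goal difference, (3) goals scored, computed over these $8$ matches, then by further fixed tie-breaking rules. The eight best runners-up advance to the play-offs ($\mathcal{R}=1$) and the worst runner-up is eliminated ($\mathcal{R}=0$). Then this system is not strategy-proof: there exist a team $x$ in some group and two sets of group results $V,\bar V$ that coincide except that in one match of $x$ the opponent scores more goals against $x$ under $\bar V$ than under $V$, such that $\mathcal{R}(V,x)=0$ and $\mathcal{R}(\bar V,x)=1$.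
   Context: $\mathcal{R}(V,x)\in\{0,1,2\}$ denotes the outcome for team $x$ under the full set of match results $V$ of all nine groups: $2$ = directly qualified, $1$ = advanced to the play-offs, $0$ = eliminated. A set of group results records, for every ordered pair $(x,y)$ of distinct teams of the same group, the numbers of goals scored by the home team $x$ and the away team $y$ in their match at $x$'s home. *)

From HB Require Import structures.
From mathcomp Require Import all_boot all_order all_algebra.
Set Implicit Arguments. Unset Strict Implicit. Unset Printing Implicit Defensive.
Import Order.TTheory GRing.Theory Num.Theory.

Definition team := ('I_9 * 'I_6)%type.

(* A set of group results: V g x y = (goals of home team x, goals of away
   team y) in the match of group g played at x's home (only x <> y matters). *)
Definition results := 'I_9 -> 'I_6 -> 'I_6 -> nat * nat.

Definition match_pts (a b : nat) : nat :=
  if b < a then 3 else if a == b then 1 else 0.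

Definition pts_on (V : results) (g : 'I_9) (i : 'I_6) (P : pred 'I_6) : nat :=
  \sum_(y < 6 | (y != i) && P y)
     (match_pts (V g i y).1 (V g i y).2 + match_pts (V g y i).2 (V g y i).1).
Definition gs_on (V : results) (g : 'I_9) (i : 'I_6) (P : pred 'I_6) : nat :=
  \sum_(y < 6 | (y != i) && P y) ((V g i y).1 + (V g y i).2).
Definition gc_on (V : results) (g : 'I_9) (i : 'I_6) (P : pred 'I_6) : nat :=
  \sum_(y < 6 | (y != i) && P y) ((V g i y).2 + (V g y i).1).
Definition gd_on (V : results) (g : 'I_9) (i : 'I_6) (P : pred 'I_6) : int :=
  ((gs_on V g i P)%:Z - (gc_on V g i P)%:Z)%R.

Definition lex_better (p1 p2 : nat) (d1 d2 : int) (s1 s2 : nat) (t1 t2 : nat)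
  : bool :=
  (p2 < p1) || ((p1 == p2) &&
    ((d2 < d1)%R || ((d1 == d2) && ((s2 < s1) || ((s1 == s2) && (t2 < t1)))))).

(* Further tie-breaking rules: arbitrary (possibly result-dependent) values,
   required to be injective (so that the ranking is strict). *)
Definition group_tb := results -> 'I_9 -> 'I_6 -> nat.
Definition rep_tb := results -> 'I_9 -> nat.

Definition group_better (tb : group_tb) (V : results) (g : 'I_9) (i j : 'I_6)
  : bool :=
  lex_better (pts_on V g i predT) (pts_on V g j predT)
             (gd_on V g i predT) (gd_on V g j predT)
             (gs_on V g i predT) (gs_on V g j predT)
             (tb V g i) (tb V g j).

(* position in the group: 0 = first, 1 = second (runner-up), ..., 5 = sixth *)
Definition position (tb : group_tb) (V : results) (g : 'I_9) (i : 'I_6) : nat :=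
  #|[pred j : 'I_6 | group_better tb V g j i]|.

Definition top5 (tb : group_tb) (V : results) (g : 'I_9) : pred 'I_6 :=
  fun y => position tb V g y < 5.

Definition rep_better (tb : group_tb) (rtb : rep_tb) (V : results)
  (g : 'I_9) (i : 'I_6) (h : 'I_9) (j : 'I_6) : bool :=
  lex_better (pts_on V g i (top5 tb V g)) (pts_on V h j (top5 tb V h))
             (gd_on V g i (top5 tb V g)) (gd_on V h j (top5 tb V h))
             (gs_on V g i (top5 tb V g)) (gs_on V h j (top5 tb V h))
             (rtb V g) (rtb V h).

Definition rep_count (tb : group_tb) (rtb : rep_tb) (V : results)
  (g : 'I_9) (i : 'I_6) : nat :=
  #|[pred h : 'I_9 | (h != g) &&
      [exists j : 'I_6, (position tb V h j == 1) && rep_better tb rtb V h j g i]]|.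

Definition outcome (tb : group_tb) (rtb : rep_tb) (V : results) (x : team)
  : nat :=
  let g := x.1 in let i := x.2 in
  if position tb V g i == 0 then 2
  else if position tb V g i == 1 then
    (if rep_count tb rtb V g i < 8 then 1 else 0)
  else 0.

Definition concede_more (x : team) (V Vbar : results) : Prop :=
  exists y : 'I_6, y != x.2 /\
   ( ((Vbar x.1 x.2 y).1 = (V x.1 x.2 y).1 /\ (V x.1 x.2 y).2 < (Vbar x.1 x.2 y).2
      /\ forall g a b, (g, a, b) <> (x.1, x.2, y) -> Vbar g a b = V g a b)
   \/ ((Vbar x.1 y x.2).2 = (V x.1 y x.2).2 /\ (V x.1 y x.2).1 < (Vbar x.1 y x.2).1
      /\ forall g a b, (g, a, b) <> (x.1, y, x.2) -> Vbar g a b = V g a b)).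

From mathcomp Require Import all_boot all_order all_algebra.

(** Runners-up are compared on their matches against the top five of their
    group only, so a runner-up gains when the sixth place goes to a team it
    lost to rather than to a team it beat.  In group 0 of the example below,
    the runner-up x beats team 4 twice and loses twice to team 5, and teams 4
    and 5 both finish with six points, team 5 ahead on goal difference.  If x
    lets in two goals in its 5-0 home win over team 4, team 4 overtakes team 5,
    the two defeats of x are discarded instead of its two wins, and x moves
    from the worst runner-up (12 points) to the best (18 points), the
    runners-up of the other groups having 16 points. *)

Lemma lex_better_ltn p1 p2 d1 d2 s1 s2 t1 t2 :
  p2 < p1 -> lex_better p1 p2 d1 d2 s1 s2 t1 t2.
Proof. by rewrite /lex_better => ->. Qed.

Lemma lex_better_gtn p1 p2 d1 d2 s1 s2 t1 t2 :
  p1 < p2 -> ~~ lex_better p1 p2 d1 d2 s1 s2 t1 t2.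
Proof. by move=> lt12; rewrite /lex_better ltnNge (ltnW lt12) ltn_eqF. Qed.

(* A team is compared with itself only by the further tie-breakers, so
   dropping that comparison lets standings be computed for an unknown [tb]. *)
Lemma position_other tb V g i :
  position tb V g i = #|[pred j | (j != i) && group_better tb V g j i]|.
Proof.
apply: eq_card => j; rewrite !inE; case: eqVneq => // ->.
by rewrite /group_better /lex_better !ltnn !eqxx Order.POrderTheory.ltxx.
Qed.

Lemma eq_pts_on V g i {P Q : pred 'I_6} :
  P =1 Q -> pts_on V g i P = pts_on V g i Q.
Proof. by move=> PQ; apply: eq_bigl => y; rewrite PQ. Qed.

Definition rep_pts tb V g i := pts_on V g i (top5 tb V g).

Lemma rep_count_best tb rtb V g i :
  (forall h j, h != g -> position tb V h j = 1 ->
     rep_pts tb V h j < rep_pts tb V g i) ->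
  rep_count tb rtb V g i = 0.
Proof.
move=> worse; apply: eq_card0 => h; rewrite !inE.
apply/andP=> -[hg /existsP[j /andP[/eqP pos1]]].
exact/negP/lex_better_gtn/worse.
Qed.

Lemma rep_count_worst tb rtb V g i (runner_up : 'I_9 -> 'I_6) :
  (forall h, position tb V h (runner_up h) = 1) ->
  (forall h, h != g -> rep_pts tb V g i < rep_pts tb V h (runner_up h)) ->
  rep_count tb rtb V g i = 8.
Proof.
move=> pos1 better; rewrite -[8]/(9.-1) -[9](card_ord 9) -(cardC1 g).
apply: eq_card => h; rewrite !inE; case: eqVneq => //= hg.
apply/existsP; exists (runner_up h); rewrite pos1 eqxx.
exact/lex_better_ltn/better.
Qed.

Lemma outcome_runner_up tb rtb V x :
  position tb V x.1 x.2 = 1 ->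
  outcome tb rtb V x = (rep_count tb rtb V x.1 x.2 < 8).
Proof. by rewrite /outcome => ->. Qed.

Definition team1 : 'I_6 := @Ordinal 6 1 isT.
Definition team4 : 'I_6 := @Ordinal 6 4 isT.
Definition team5 : 'I_6 := @Ordinal 6 5 isT.

Definition lower_index_wins (x y : 'I_6) : nat * nat :=
  if x < y then (1, 0) else (0, 1).

(* [c] is the number of goals team 4 scores at team 1; the other exceptions
   give points 30, 18, 16, 13, 6, 6 and make the goal differences of teams 4
   and 5 equal to [-10 + c] and [-9]. *)
Definition group0 (c : nat) (x y : 'I_6) : nat * nat :=
  match val x, val y with
  | 0, 5 => (4, 0)
  | 1, 4 => (5, c)
  | 1, 5 => (0, 1)
  | 5, 1 => (1, 0)
  | 3, 2 => (1, 1)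
  | _, _ => lower_index_wins x y
  end.

Definition other_group (x y : 'I_6) : nat * nat :=
  if (val x == 2) && (val y == 1) then (1, 1) else lower_index_wins x y.

Definition scenario (c : nat) : results :=
  fun g => if g == ord0 then group0 c else other_group.

Lemma scenario_concede_more :
  concede_more (ord0, team1) (scenario 0) (scenario 2).
Proof.
exists team4; split=> //; left; do 2!split=> //.
move=> g a b ne_match; rewrite /scenario; case: eqP => // g0.
case: a b ne_match => [[|[|[|[|[|[|//]]]]]] pa] [[|[|[|[|[|[|//]]]]]] pb] //.
by case; rewrite g0; congr (_, _, _); apply: val_inj.
Qed.

Lemma scenario_other c g : g != ord0 -> scenario c g = other_group.
Proof. by rewrite /scenario => /negbTE ->. Qed.

(* [vm_compute] cannot evaluate [enum 'I_6], whose elements are built from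
   opaque membership proofs, hence the explicit list. *)
Definition ords6 : seq 'I_6 :=
  [:: @Ordinal 6 0 isT; @Ordinal 6 1 isT; @Ordinal 6 2 isT;
      @Ordinal 6 3 isT; @Ordinal 6 4 isT; @Ordinal 6 5 isT].

Lemma index_enum_ord6 : index_enum 'I_6 = ords6.
Proof.
rewrite /index_enum unlock; apply: (inj_map val_inj).
by rewrite -enumT val_enum_ord.
Qed.

Ltac compute_table :=
  rewrite -?sum1_card index_enum_ord6 unlock; vm_compute; reflexivity.

Lemma scenario_position_other tb c g i :
  g != ord0 -> position tb (scenario c) g i = i.
Proof.
move=> g0; rewrite position_other /group_better /gd_on /gs_on /gc_on /pts_on.
rewrite scenario_other //; move: (tb (scenario c) g) => t.
by case: i => [[|[|[|[|[|[|//]]]]]] ?]; compute_table.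
Qed.

Lemma scenario0_position_group0 tb i :
  position tb (scenario 0) ord0 i =
    if i == team4 then 5 else if i == team5 then 4 else i.
Proof.
rewrite position_other /group_better /gd_on /gs_on /gc_on /pts_on.
move: (tb (scenario 0) ord0) => t.
by case: i => [[|[|[|[|[|[|//]]]]]] ?]; compute_table.
Qed.

Lemma scenario2_position_group0 tb i : position tb (scenario 2) ord0 i = i.
Proof.
rewrite position_other /group_better /gd_on /gs_on /gc_on /pts_on.
move: (tb (scenario 2) ord0) => t.
by case: i => [[|[|[|[|[|[|//]]]]]] ?]; compute_table.
Qed.

Lemma ord6_ltn5 (y : 'I_6) : (y < 5) = (y != team5).
Proof. by case: y => [[|[|[|[|[|[|//]]]]]] ?]. Qed.

Lemma top5_scenario_other tb c g :
  g != ord0 -> top5 tb (scenario c) g =1 predC1 team5.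
Proof. by move=> g0 y; rewrite /top5 scenario_position_other // ord6_ltn5. Qed.

Lemma top5_scenario0_group0 tb : top5 tb (scenario 0) ord0 =1 predC1 team4.
Proof.
move=> y; rewrite /top5 scenario0_position_group0.
by case: y => [[|[|[|[|[|[|//]]]]]] ?].
Qed.

Lemma top5_scenario2_group0 tb : top5 tb (scenario 2) ord0 =1 predC1 team5.
Proof. by move=> y; rewrite /top5 scenario2_position_group0 ord6_ltn5. Qed.

Lemma rep_pts_scenario_other tb c g :
  g != ord0 -> rep_pts tb (scenario c) g team1 = 16.
Proof.
move=> g0; rewrite /rep_pts (eq_pts_on _ _ _ (top5_scenario_other tb c g g0)).
by rewrite /pts_on scenario_other //; compute_table.
Qed.

Lemma rep_pts_scenario0_group0 tb : rep_pts tb (scenario 0) ord0 team1 = 12.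
Proof.
rewrite /rep_pts (eq_pts_on _ _ _ (top5_scenario0_group0 tb)).
by rewrite /pts_on; compute_table.
Qed.

Lemma rep_pts_scenario2_group0 tb : rep_pts tb (scenario 2) ord0 team1 = 18.
Proof.
rewrite /rep_pts (eq_pts_on _ _ _ (top5_scenario2_group0 tb)).
by rewrite /pts_on; compute_table.
Qed.

(* The example never reaches the further tie-breakers. *)
Theorem corollary3p1 (tb : group_tb) (rtb : rep_tb)
  (tb_inj : forall V g, injective (tb V g))
  (rtb_inj : forall V, injective (rtb V)) :
  exists (x : team) (V Vbar : results),
    concede_more x V Vbar /\ outcome tb rtb V x = 0 /\ outcome tb rtb Vbar x = 1.
Proof.
exists (ord0, team1), (scenario 0), (scenario 2).
split; first exact: scenario_concede_more.
split.
- rewrite outcome_runner_up ?scenario0_position_group0 //.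
  rewrite (@rep_count_worst _ _ _ _ _ (fun=> team1)) //.
  + by move=> h; case: (eqVneq h ord0) => [->|h0];
      rewrite ?scenario0_position_group0 ?scenario_position_other.
  + by move=> h h0; rewrite rep_pts_scenario0_group0 rep_pts_scenario_other.
- rewrite outcome_runner_up ?scenario2_position_group0 // rep_count_best //.
  move=> h j h0; rewrite scenario_position_other // => j1.
  have -> : j = team1 by apply: val_inj.
  by rewrite rep_pts_scenario_other // rep_pts_scenario2_group0.
Qed.
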